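(* Let $H_1,H_2$ be Hermitian matrices with $H_1=D_1^\dagger D_1$ for some matrix $D_1$, and suppose there are constants $\widetilde C_1,\widetilde C_2\ge0$ such that for every vector $\vec v$: $\|[H_1,H_2]\vec v\|\le\widetilde C_1(\|D_1\vec v\|+\|\vec v\|)$ and $\|[H_1,[H_1,H_2]]\vec v\|\le\widetilde C_2(\|H_1\vec v\|+\|\vec v\|)$. Then: (1) For every vector $\vec v$, $\|D_1\vec v\|\le\|H_1\vec v\|+\|\vec v\|$. (2) For every real $\xi$ with $(\widetilde C_1+\|H_2\|)|\xi|\le1/2$ and every vector $\vec v$, $\|H_1\exp(\mathrm{i}\xi H_2)\vec v\|\le2(\|H_1\vec v\|+\|\vec v\|)$. (3) Let $K\ge1$, $h>0$, and for $1\le k\le K$ let $H_{l_k}\in\{H_1,H_2\}$ and $\xi_k\in\mathbb{R}$ with $(\widetilde C_1+\|H_2\|)|\xi_k|h\le1/2$. Put $\vec w=\big[\prod_{k=1}^K\exp(\mathrm{i} h\xi_kH_{l_k})\big]\vec v$. Then there is a constant $\widetilde C>0$, independent of $H_1$ and $\vec v$, such that for every $\vec v$: $\|H_1\vec w\|\le\widetilde C(\|H_1\vec v\|+\|\vec v\|)$, $\|H_2\vec w\|\le\widetilde C\|\vec v\|$, $\|[H_1,H_2]\vec w\|\le\widetilde C(\sqrt{\|\vec v\|\|H_1\vec v\|}+\|\vec v\|)$, $\|[H_1,[H_1,H_2]]\vec w\|\le\widetilde C(\|H_1\vec v\|+\|\vec v\|)$, and $\|[H_2,[H_2,H_1]]\vec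 w\|\le\widetilde C(\|H_1\vec v\|+\|\vec v\|)$.
   Context: $\|\cdot\|$ is the Euclidean vector 2-norm and the induced operator norm. $[A,B]=AB-BA$. *)

From HB Require Import structures.
From mathcomp Require Import all_boot all_order all_algebra.
From mathcomp Require Import complex.
From mathcomp Require Import all_classical all_reals all_analysis.
Set Implicit Arguments. Unset Strict Implicit. Unset Printing Implicit Defensive.
Import Order.TTheory GRing.Theory Num.Theory numFieldNormedType.Exports.
Local Open Scope ring_scope.
Local Open Scope complex_scope.
Local Open Scope classical_set_scope.

Definition vnorm (R : realType) (n : nat) (v : 'cV[R[i]]_n) : R :=
  Num.sqrt (\sum_(j < n) ((complex.Re (v j 0)) ^+ 2 + (complex.Im (v j 0)) ^+ 2)).

Definition opnorm (R : realType) (m n : nat) (A : 'M[R[i]]_(m, n)) : R :=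
  sup [set vnorm (A *m v) | v in [set v : 'cV[R[i]]_n | vnorm v <= 1]].

Definition adjmx (R : realType) (m n : nat) (A : 'M[R[i]]_(m, n)) : 'M[R[i]]_(n, m) :=
  \matrix_(i, j) conjc (A j i).

Definition hermmx (R : realType) (n : nat) (A : 'M[R[i]]_n) : Prop :=
  adjmx A = A.

Definition mxcomm (R : realType) (n : nat) (A B : 'M[R[i]]_n) : 'M[R[i]]_n :=
  A *m B - B *m A.

Definition mxpow (R : realType) (n : nat) (A : 'M[R[i]]_n) (k : nat) : 'M[R[i]]_n :=
  iter k (mulmx A) 1%:M.

Definition expmx_partial (R : realType) (n : nat) (A : 'M[R[i]]_n) (N : nat) :
  'M[R[i]]_n :=
  \sum_(k < N) ((k`!%:R)^-1 : R)%:C *: mxpow A k.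

Definition expmx (R : realType) (n : nat) (A : 'M[R[i]]_n) : 'M[R[i]]_n :=
  \matrix_(i, j)
    ((limn (fun N => complex.Re (expmx_partial A N i j)))
       +i* (limn (fun N => complex.Im (expmx_partial A N i j)))).

Definition expi (R : realType) (n : nat) (x : R) (A : 'M[R[i]]_n) : 'M[R[i]]_n :=
  expmx (('i * x%:C) *: A).

Definition mxprod (R : realType) (n : nat) (F : nat -> 'M[R[i]]_n) (K : nat) :
  'M[R[i]]_n :=
  foldr (fun k acc => F k *m acc) 1%:M (iota 0 K).

(* (1) is Cauchy-Schwarz: |D1 v|^2 = <v, H1 v> <= |v| |H1 v|.
   (2) Diagonalising H2 = P^* diag(lam) P makes exp(i xi H2) explicit, and
   exp(i xi H2) = U^N with U = exp(i t H2), t = xi / N.  Since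
   [H1, U] = i t [H1, H2] + O(t^2), the numbers a_k = |H1 U^k v| satisfy
   a_(k+1) <= a_k + |t| C1 (a_k + 2 |v|) + O(N^-2) (using (1) to bound |D1 U^k v|),
   and N |t| C1 <= 1/2 turns this discrete Groenwall inequality into
   a_N <= 2 (a_0 + |v|) + O(1/N); let N go to infinity.
   (3) All factors of the product are unitary; the factors exp(i h xi_k H1)
   commute with H1, and by (2) each factor at most triples the graph norm
   |H1 y| + |y|, so the graph norm of w is at most 3^K times that of v.  The
   commutator bounds then follow from the hypotheses, from
   |D1 w|^2 <= |w| |H1 w|, and from [H2, [H2, H1]] = [H1, H2] H2 - H2 [H1, H2]. *)

From HB Require Import structures.
From mathcomp Require Import all_boot all_order all_algebra.
From mathcomp Require Import complex.
From mathcomp Require Import all_classical all_reals all_analysis.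
From mathcomp Require Import ring lra.
Import Order.TTheory GRing.Theory Num.Theory numFieldNormedType.Exports.
Set Implicit Arguments. Unset Strict Implicit. Unset Printing Implicit Defensive.
Local Open Scope ring_scope.
Local Open Scope complex_scope.
Local Open Scope classical_set_scope.

Lemma adjmxM (R : realType) m n p (A : 'M[R[i]]_(m, n)) (B : 'M[R[i]]_(n, p)) :
  adjmx (A *m B) = adjmx B *m adjmx A.
Proof.
apply/matrixP => i j; rewrite !mxE rmorph_sum; apply: eq_bigr => k _.
by rewrite !mxE rmorphM mulrC.
Qed.

Lemma adjmxK (R : realType) m n (A : 'M[R[i]]_(m, n)) : adjmx (adjmx A) = A.
Proof. by apply/matrixP => i j; rewrite !mxE conjcK. Qed.

Section VectorNorm.
Variables (R : realType) (n : nat).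
Local Notation C := R[i].
Implicit Types u v w : 'cV[C]_n.

Lemma dotmx_trmx u w : dotmx u^T w^T = (adjmx w *m u) 0 0.
Proof. by rewrite dotmxE !mxE; apply: eq_bigr => j _; rewrite !mxE mulrC. Qed.

Lemma sqr_vnorm_dotmx v : ((vnorm v) ^+ 2)%:C = dotmx v^T v^T.
Proof.
rewrite sqr_sqrtr ?sumr_ge0// => [|j _]; last by rewrite addr_ge0 ?sqr_ge0.
rewrite dotmx_trmx mxE rmorph_sum; apply: eq_bigr => j _.
rewrite mxE; case: (v j 0) => a b /=.
by congr (_ +i* _); ring.
Qed.

Lemma sqr_vnormE v : vnorm v ^+ 2 = complex.Re ((adjmx v *m v) 0 0).
Proof. by rewrite -dotmx_trmx -sqr_vnorm_dotmx. Qed.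

Lemma vnorm_sqrtC v : (vnorm v)%:C = sqrtC (dotmx v^T v^T).
Proof. by rewrite -sqr_vnorm_dotmx rmorphXn sqrCK // ler0c sqrtr_ge0. Qed.

Lemma vnorm_ge0 v : 0 <= vnorm v.
Proof. exact: sqrtr_ge0. Qed.

Lemma vnormD u w : vnorm (u + w) <= vnorm u + vnorm w.
Proof.
rewrite -lecR rmorphD /= !vnorm_sqrtC linearD /=.
exact: (triangle_lerif (@dotmx C n)).
Qed.

Lemma vnormZ (c : C) v : (vnorm (c *: v))%:C = `|c| * (vnorm v)%:C.
Proof.
rewrite !vnorm_sqrtC linearZ /= dnormZ.
by rewrite sqrtCM ?nnegrE ?exprn_ge0 // sqrCK.
Qed.

Lemma vnormN v : vnorm (- v) = vnorm v.
Proof. by apply: complexI; rewrite -scaleN1r vnormZ normrN1 mul1r. Qed.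

Lemma vnormZ_imag (t : R) v : vnorm (('i * t%:C) *: v) = `|t| * vnorm v.
Proof.
apply: complexI; rewrite vnormZ rmorphM normc_def /=.
by rewrite !(mul0r, mul1r, subr0, addr0, add0r) oppr0 expr0n add0r sqrtr_sqr.
Qed.

Lemma vnormB u w : vnorm (u - w) <= vnorm u + vnorm w.
Proof. by rewrite -(vnormN w) vnormD. Qed.

Lemma Re_dotmx_le_vnorm u w : complex.Re ((adjmx w *m u) 0 0) <= vnorm u * vnorm w.
Proof.
rewrite -lecR rmorphM /= !vnorm_sqrtC -dotmx_trmx.
apply: le_trans (_ : `|complex.Re (dotmx u^T w^T)|%:C <= _); first by rewrite lecR ler_norm.
apply: le_trans (normc_ge_Re _) _.
exact: (CauchySchwarz_sqrt (@dotmx C n)).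
Qed.

Lemma vnorm0 : vnorm (0 : 'cV[C]_n) = 0.
Proof. by apply: complexI; rewrite -(scale0r 0) vnormZ normr0 mul0r. Qed.

Lemma sqr_vnorm_sum v : ((vnorm v) ^+ 2)%:C = \sum_j `|v j 0| ^+ 2.
Proof.
rewrite sqr_vnorm_dotmx dotmx_trmx mxE; apply: eq_bigr => j _.
by rewrite mxE sqr_normc mulrC.
Qed.

Lemma vnorm_unitary (Q : 'M[C]_n) v :
  adjmx Q *m Q = 1%:M -> vnorm (Q *m v) = vnorm v.
Proof.
move=> QU; apply: complexI; rewrite !vnorm_sqrtC !dotmx_trmx adjmxM.
by rewrite -mulmxA (mulmxA (adjmx Q)) QU mul1mx.
Qed.

Lemma vnorm_diag_le (r : 'rV[C]_n) (M : R) v :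
  0 <= M -> (forall j, `|r 0 j| <= M%:C) -> vnorm (diag_mx r *m v) <= M * vnorm v.
Proof.
move=> M0 rM; rewrite -(@ler_pXn2r _ 2) ?nnegrE ?mulr_ge0 ?vnorm_ge0 //.
suff: ((vnorm (diag_mx r *m v)) ^+ 2)%:C <= ((M * vnorm v) ^+ 2)%:C by rewrite lecR.
have -> : ((M * vnorm v) ^+ 2)%:C = M%:C ^+ 2 * ((vnorm v) ^+ 2)%:C.
  by rewrite exprMn rmorphM rmorphXn.
rewrite !sqr_vnorm_sum mulr_sumr; apply: ler_sum => j _.
rewrite mul_diag_mx mxE normrM exprMn ler_wpM2r ?exprn_ge0 //.
by apply: lerXn2r; rewrite // nnegrE ?ler0c.
Qed.

Lemma vnorm_diag (r : 'rV[C]_n) v :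
  (forall j, `|r 0 j| = 1) -> vnorm (diag_mx r *m v) = vnorm v.
Proof.
move=> r1; apply: (@pexpIrn _ 2); rewrite ?nnegrE ?vnorm_ge0 //.
apply: (@complexI R); rewrite !sqr_vnorm_sum; apply: eq_bigr => j _.
by rewrite mul_diag_mx mxE normrM r1 mul1r.
Qed.

End VectorNorm.

Lemma sqr_vnorm_le_gram (R : realType) m n (D : 'M[R[i]]_(m, n)) v :
  vnorm (D *m v) ^+ 2 <= vnorm v * vnorm ((adjmx D *m D) *m v).
Proof.
rewrite sqr_vnormE adjmxM -mulmxA (mulmxA (adjmx D)) mulrC.
exact: Re_dotmx_le_vnorm.
Qed.

Lemma vnorm_le_gram (R : realType) m n (D : 'M[R[i]]_(m, n)) v :
  vnorm (D *m v) <= vnorm ((adjmx D *m D) *m v) + vnorm v.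
Proof.
have := sqr_vnorm_le_gram D v.
have := vnorm_ge0 (D *m v); have := vnorm_ge0 v; have := vnorm_ge0 ((adjmx D *m D) *m v).
nra.
Qed.

Section Commutator.
Variables (R : realType) (n : nat).
Implicit Types A B C : 'M[R[i]]_n.

Lemma mxcommDr A B C : mxcomm A (B + C) = mxcomm A B + mxcomm A C.
Proof. by rewrite /mxcomm mulmxDr mulmxDl opprD addrACA. Qed.

Lemma mxcommZr A (c : R[i]) B : mxcomm A (c *: B) = c *: mxcomm A B.
Proof. by rewrite /mxcomm scalerBr -scalemxAl -scalemxAr. Qed.

Lemma mxcomm1r A : mxcomm A 1%:M = 0.
Proof. by rewrite /mxcomm mulmx1 mul1mx subrr. Qed.

Lemma mulmx_mxcomm A B (v : 'cV[R[i]]_n) :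
  A *m (B *m v) = B *m (A *m v) + mxcomm A B *m v.
Proof. by rewrite /mxcomm mulmxBl !mulmxA addrC subrK. Qed.

Lemma mulmx_mxcommE A B (v : 'cV[R[i]]_n) :
  mxcomm A B *m v = A *m (B *m v) - B *m (A *m v).
Proof. by rewrite /mxcomm mulmxBl -!mulmxA. Qed.

Lemma mxcomm_double A B : mxcomm B (mxcomm B A) = mxcomm (mxcomm A B) B.
Proof. by rewrite /mxcomm !(mulmxBl, mulmxBr) !mulmxA !opprB addrC. Qed.

End Commutator.

Section Trigonometry.
Variable R : realType.

Lemma mvt_norm_le (f df : R -> R) (x B : R) :
  (forall y : R, is_derive y (1 : R) f (df y)) ->
  (forall y, `|y| <= `|x| -> `|df y| <= B) ->
  `|f x - f 0| <= B * `|x|.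
Proof.
move=> f_df dfB; have B0 : 0 <= B by apply: le_trans (dfB 0 _); rewrite ?normr0.
have f_cont : continuous f.
  by move=> y; apply/differentiable_continuous/derivable1_diffP/ex_derive; exact: f_df.
have [x_lt0|x_gt0|->] := ltgtP x 0; last by rewrite subrr !normr0 mulr0.
- have [c c_in eq_f] := MVT x_lt0 (fun y _ => f_df y) (continuous_subspaceT f_cont).
  move: c_in; rewrite in_itv /= => /andP[xc c0].
  rewrite distrC eq_f sub0r normrM normrN ler_wpM2r // dfB // !ltr0_norm //; lra.
- have [c c_in eq_f] := MVT x_gt0 (fun y _ => f_df y) (continuous_subspaceT f_cont).
  move: c_in; rewrite in_itv /= => /andP[c0 cx].
  rewrite eq_f subr0 normrM ler_wpM2r // dfB // !gtr0_norm //; lra.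
Qed.

Lemma norm_sin_le (x : R) : `|sin x| <= `|x|.
Proof.
have := @mvt_norm_le sin cos x 1 (fun y => is_derive_sin y) (fun y _ => cos_max y).
by rewrite sin0 subr0 mul1r.
Qed.

Lemma norm_cos_sub1_le (x : R) : `|cos x - 1| <= x ^+ 2.
Proof.
rewrite -cos0 -real_normK ?num_real // expr2.
apply: mvt_norm_le (fun y => is_derive_cos y) _ => y y_le.
by rewrite normrN (le_trans (norm_sin_le y)).
Qed.

Lemma norm_sin_sub_le (x : R) : `|sin x - x| <= `|x| ^+ 3.
Proof.
have -> : sin x - x = (sin x - x) - (sin 0 - 0) by rewrite sin0 subr0 subr0.
rewrite exprSr.
apply: (@mvt_norm_le (fun z => sin z - z) (fun z => cos z - 1)) => y y_le.
apply: le_trans (norm_cos_sub1_le y) _.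
by rewrite -real_normK ?num_real // lerXn2r ?nnegrE.
Qed.

End Trigonometry.

Lemma Re_mulc (R : realType) (w z : R[i]) :
  complex.Re (w * z) = complex.Re w * complex.Re z - complex.Im w * complex.Im z.
Proof. by case: w; case: z. Qed.

Lemma Im_mulc (R : realType) (w z : R[i]) :
  complex.Im (w * z) = complex.Re w * complex.Im z + complex.Im w * complex.Re z.
Proof. by case: w => a b; case: z => c d /=; ring. Qed.

Section Cis.
Variable R : realType.
Implicit Types x y : R.

Definition cis x : R[i] := cos x +i* sin x.

Lemma cis0 : cis 0 = 1.
Proof. by rewrite /cis cos0 sin0. Qed.

Lemma cisD x y : cis (x + y) = cis x * cis y.
Proof. by rewrite /cis cosD sinD /=; congr (_ +i* _); ring. Qed.

Lemma norm_cis x : `|cis x| = 1.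
Proof. by rewrite normc_def /= cos2Dsin2 sqrtr1. Qed.

Lemma norm_cis_sub_le x : `|x| <= 1 -> `|cis x - 1 - 'i * x%:C| <= (2 * x ^+ 2)%:C.
Proof.
move=> x_le1.
have -> : cis x - 1 - 'i * x%:C = (cos x - 1) +i* (sin x - x).
  by rewrite /cis /=; congr (_ +i* _); ring.
rewrite normc_def lecR /=.
have cos_le : (cos x - 1) ^+ 2 <= (x ^+ 2) ^+ 2.
  by rewrite -real_normK ?num_real // lerXn2r ?nnegrE ?sqr_ge0 ?norm_cos_sub1_le.
have sin_le : (sin x - x) ^+ 2 <= (x ^+ 2) ^+ 2.
  rewrite -real_normK ?num_real // lerXn2r ?nnegrE ?sqr_ge0 //.
  apply: le_trans (norm_sin_sub_le x) _.
  by rewrite -real_normK ?num_real // exprSr ler_piMr ?exprn_ge0.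
set s := Num.sqrt _; have s0 : 0 <= s := sqrtr_ge0 _.
have s2 : s ^+ 2 = (cos x - 1) ^+ 2 + (sin x - x) ^+ 2.
  by rewrite sqr_sqrtr ?addr_ge0 ?sqr_ge0.
have x0 : 0 <= x ^+ 2 := sqr_ge0 x.
nra.
Qed.

Lemma expr_i_double m : ('i : R[i]) ^+ m.*2 = ((-1) ^+ m)%:C.
Proof. by rewrite -mul2n exprM sqr_i rmorphXn rmorphN1. Qed.

Lemma exp_partial_term x k :
  (k`!%:R^-1)%:C * ('i * x%:C) ^+ k = cos_coeff x k +i* sin_coeff x k.
Proof.
rewrite /cos_coeff /sin_coeff /= exprMn -rmorphXn.
have := odd_double_half k; set m := k./2; case: (odd k) => /= <-.
- rewrite add1n /= exprS expr_i_double half_double /=.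
  by apply/eqP; rewrite eq_complex /=; apply/andP; split; apply/eqP; ring.
- rewrite /= expr_i_double -exprnP /=.
  by apply/eqP; rewrite eq_complex /=; apply/andP; split; apply/eqP; ring.
Qed.

Lemma exp_partial_cis x N :
  \sum_(k < N) (k`!%:R^-1)%:C * ('i * x%:C) ^+ k =
  series (cos_coeff x) N +i* series (sin_coeff x) N.
Proof.
rewrite /series /= [RHS]complexE /= !rmorph_sum mulr_sumr !big_mkord -big_split /=.
by apply: eq_bigr => k _; rewrite exp_partial_term [LHS]complexE.
Qed.

Lemma cvg_series_cos x : series (cos_coeff x) @ \oo --> cos x.
Proof. by rewrite cos.unlock; exact: is_cvg_series_cos_coeff. Qed.

Lemma cvg_series_sin x : series (sin_coeff x) @ \oo --> sin x.
Proof. by rewrite sin.unlock; exact: is_cvg_series_sin_coeff. Qed.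

End Cis.

Section RealInequalities.
Variable R : realType.

Lemma discrete_gronwall (b : nat -> R) (al e : R) (N : nat) :
  0 <= al -> 0 <= e -> 0 <= b 0%N -> N%:R * al <= 2^-1 ->
  (forall k, (k < N)%N -> b k.+1 <= (1 + al) * b k + e) ->
  b N <= 2 * (b 0%N + N%:R * e).
Proof.
move=> al0 e0 b00 N_al b_rec; set B := 2 * (b 0%N + N%:R * e).
have B0 : 0 <= B by rewrite mulr_ge0 ?addr_ge0 ?mulr_ge0.
have d0 : 0 <= al * B + e by rewrite addr_ge0 // mulr_ge0.
have bN_le : b 0%N + N%:R * (al * B + e) <= B.
  have BE : B = 2 * (b 0%N + N%:R * e) by [].
  have := ler_wpM2r B0 N_al; lra.
have b_le k : (k <= N)%N -> b k <= b 0%N + k%:R * (al * B + e).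
  elim: k => [|k IHk] kN; first by rewrite mul0r addr0.
  have bk := IHk (ltnW kN).
  have bkB : b k <= B.
    apply: le_trans bk (le_trans _ bN_le); rewrite lerD2l ler_wpM2r // ler_nat ltnW //.
  apply: le_trans (b_rec k kN) _; rewrite mulrSr mulrDl mul1r.
  have := ler_wpM2l al0 bkB; lra.
exact: le_trans (b_le N (leqnn N)) bN_le.
Qed.

Lemma le_of_le_add_divn (x y K : R) (N0 : nat) :
  0 <= K -> (forall N, (N0 < N)%N -> x <= y + K / N%:R) -> x <= y.
Proof.
move=> K0 x_le; apply/ler_addgt0Pr => e e0.
set N := (N0 + Num.bound (K / e)).+1.
apply: le_trans (x_le N _) _; first by rewrite ltnS leq_addr.
rewrite lerD2l ler_pdivrMr ?ltr0n // -ler_pdivrMl // mulrC.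
have Ke0 : 0 <= K / e by rewrite divr_ge0 // ltW.
apply: ltW; apply: (lt_le_trans (archi_boundP Ke0)).
by rewrite ler_nat leqW // leq_addl.
Qed.

Lemma sqrt_mul_le (G a b a' b' : R) :
  1 <= G -> 0 <= a -> 0 <= b -> 0 <= a' -> 0 <= b' -> a' <= a -> b' + a' <= G * (b + a) ->
  Num.sqrt (a' * b') <= G * (Num.sqrt (a * b) + a).
Proof.
move=> G1 a0 b0 a'0 b'0 a'_le ab'_le; set s := Num.sqrt (a * b).
have s0 : 0 <= s := sqrtr_ge0 _.
have s2 : s ^+ 2 = a * b by rewrite sqr_sqrtr ?mulr_ge0.
have G_sum0 : 0 <= G * (s + a) by rewrite mulr_ge0 ?addr_ge0 //; lra.
rewrite -(ger0_norm G_sum0) -sqrtr_sqr ler_wsqrtr //.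
have ab'_le' : a' * b' <= a * (G * (a + b)) by apply: ler_pM => //; lra.
have sq0 : 0 <= a ^+ 2 + s ^+ 2 by rewrite addr_ge0 ?sqr_ge0.
have G_le : G * (a ^+ 2 + s ^+ 2) <= G ^+ 2 * (a ^+ 2 + s ^+ 2).
  by rewrite ler_wpM2r // expr2 ler_peMl //; lra.
have sa0 : 0 <= s * a by rewrite mulr_ge0.
rewrite exprMn; apply: le_trans ab'_le' _.
rewrite (_ : a * (G * (a + b)) = G * (a ^+ 2 + s ^+ 2)); last by rewrite s2; ring.
apply: le_trans G_le _; rewrite ler_wpM2l ?sqr_ge0 // sqrrD; lra.
Qed.

End RealInequalities.

Section FunctionalCalculus.
Variables (R : realType) (n : nat) (P : 'M[R[i]]_n) (lam : 'I_n -> R).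
Hypotheses (P_unitary : adjmx P *m P = 1%:M) (P_unitary' : P *m adjmx P = 1%:M).
Implicit Types (f g : R -> R[i]) (v y : 'cV[R[i]]_n).

(* For [A := mxfun (fun x => x%:C)], [mxfun f] is the matrix [f(A)] of the
   functional calculus of the hermitian matrix [A]. *)
Definition mxfun f : 'M[R[i]]_n := adjmx P *m diag_mx (\row_j f (lam j)) *m P.

Local Notation A := (mxfun (fun x => x%:C)).

Lemma mxfunM f g : mxfun f *m mxfun g = mxfun (fun x => f x * g x).
Proof.
rewrite /mxfun -!mulmxA (mulmxA P) P_unitary' mul1mx !mulmxA -(mulmxA (adjmx P)).
by rewrite mulmx_diag; congr (_ *m diag_mx _ *m _); apply/rowP => j; rewrite !mxE.
Qed.

Lemma mxfun1 : mxfun (fun=> 1) = 1%:M.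
Proof.
rewrite /mxfun (_ : diag_mx _ = 1%:M) ?mulmx1 //.
by apply/matrixP => i j; rewrite !mxE.
Qed.

Lemma mxfunD f g : mxfun f + mxfun g = mxfun (fun x => f x + g x).
Proof.
rewrite /mxfun -mulmxDl -mulmxDr -linearD /=; congr (_ *m diag_mx _ *m _).
by apply/rowP => j; rewrite !mxE.
Qed.

Lemma mxfunZ (a : R[i]) f : a *: mxfun f = mxfun (fun x => a * f x).
Proof.
rewrite /mxfun scalemxAl scalemxAr -linearZ /=; congr (_ *m diag_mx _ *m _).
by apply/rowP => j; rewrite !mxE.
Qed.

Lemma mxfunN f : - mxfun f = mxfun (fun x => - f x).
Proof. by rewrite -scaleN1r mxfunZ; congr mxfun; apply: funext => x; rewrite mulN1r. Qed.

Lemma mxfun_sum N (F : 'I_N -> R -> R[i]) :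
  \sum_(k < N) mxfun (F k) = mxfun (fun x => \sum_(k < N) F k x).
Proof.
rewrite /mxfun -mulmx_suml -mulmx_sumr -linear_sum /=; congr (_ *m diag_mx _ *m _).
by apply/rowP => j; rewrite !mxE summxE; apply: eq_bigr => k _; rewrite mxE.
Qed.

Lemma mxpow_mxfun f k : mxpow (mxfun f) k = mxfun (fun x => f x ^+ k).
Proof.
elim: k => [|k IHk]; first by rewrite /mxpow /= -mxfun1.
rewrite /mxpow iterS -/(mxpow _ k) IHk mxfunM.
by congr mxfun; apply: funext => x; rewrite exprS.
Qed.

Lemma mxfun_entry f a b : mxfun f a b = \sum_j (P j a)^* * P j b * f (lam j).
Proof.
rewrite /mxfun -mulmxA mxE; apply: eq_bigr => j _.
by rewrite mul_diag_mx !mxE [f _ * _]mulrC mulrA.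
Qed.

Lemma vnorm_mxfun_le f (M : R) v :
  0 <= M -> (forall j, `|f (lam j)| <= M%:C) -> vnorm (mxfun f *m v) <= M * vnorm v.
Proof.
move=> M0 fM; rewrite /mxfun -!mulmxA vnorm_unitary; last by rewrite adjmxK P_unitary'.
by rewrite -(vnorm_unitary v P_unitary) vnorm_diag_le // => j; rewrite mxE.
Qed.

Lemma vnorm_mxfun f v : (forall j, `|f (lam j)| = 1) -> vnorm (mxfun f *m v) = vnorm v.
Proof.
move=> f1; rewrite /mxfun -!mulmxA vnorm_unitary; last by rewrite adjmxK P_unitary'.
by rewrite vnorm_diag ?vnorm_unitary // => j; rewrite mxE.
Qed.

Lemma expmx_partial_mxfun f N :
  expmx_partial (mxfun f) N = mxfun (fun x => \sum_(k < N) (k`!%:R^-1)%:C * f x ^+ k).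
Proof.
rewrite /expmx_partial -mxfun_sum; apply: eq_bigr => k _.
by rewrite mxpow_mxfun mxfunZ.
Qed.

Lemma cvg_mxfun_entry (F : nat -> R -> R[i]) f a b :
  (forall x, complex.Re (F N x) @[N --> \oo] --> complex.Re (f x)) ->
  (forall x, complex.Im (F N x) @[N --> \oo] --> complex.Im (f x)) ->
  complex.Re (mxfun (F N) a b) @[N --> \oo] --> complex.Re (mxfun f a b) /\
  complex.Im (mxfun (F N) a b) @[N --> \oo] --> complex.Im (mxfun f a b).
Proof.
move=> ReF ImF.
split; under eq_cvg do rewrite mxfun_entry raddf_sum; rewrite mxfun_entry raddf_sum;
  apply: cvg_big => [|j _ /=]; try exact: add_continuous.
- under eq_cvg do rewrite Re_mulc; rewrite Re_mulc.
  by apply: cvgB; apply: cvgMl_tmp.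
- under eq_cvg do rewrite Im_mulc; rewrite Im_mulc.
  by apply: cvgD; apply: cvgMl_tmp.
Qed.

Lemma expi_mxfun t : expi t A = mxfun (fun x => cis (t * x)).
Proof.
rewrite /expi; have -> : ('i * t%:C) *: A = mxfun (fun x => 'i * (t * x)%:C).
  by rewrite mxfunZ; congr mxfun; apply: funext => x; rewrite rmorphM mulrA.
apply/matrixP => a b; rewrite /expmx mxE.
have [] := @cvg_mxfun_entry
  (fun N x => \sum_(k < N) (k`!%:R^-1)%:C * ('i * (t * x)%:C) ^+ k)
  (fun x => cis (t * x)) a b.
- by move=> x; under eq_cvg do rewrite exp_partial_cis; exact: cvg_series_cos.
- by move=> x; under eq_cvg do rewrite exp_partial_cis; exact: cvg_series_sin.
move=> cvg_Re cvg_Im; apply/eqP; rewrite eq_complex; apply/andP.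
by split; apply/eqP/cvg_lim => //; under eq_cvg do rewrite expmx_partial_mxfun.
Qed.

Definition lam_bound := \sum_j `|lam j|.

Lemma norm_lam_le j : `|lam j| <= lam_bound.
Proof.
by rewrite /lam_bound (bigD1 j) //= lerDl; apply: sumr_ge0.
Qed.

Lemma lam_bound_ge0 : 0 <= lam_bound.
Proof. by apply: sumr_ge0. Qed.

Lemma vnorm_mxfun_id_le v : vnorm (A *m v) <= lam_bound * vnorm v.
Proof.
apply: vnorm_mxfun_le (lam_bound_ge0) _ => j.
by rewrite normc_def /= expr0n addr0 sqrtr_sqr lecR norm_lam_le.
Qed.

Lemma vnorm_expi v t : vnorm (expi t A *m v) = vnorm v.
Proof. by rewrite expi_mxfun vnorm_mxfun // => j; apply: norm_cis. Qed.

Lemma mxfun_id_expi_comm t : A *m expi t A = expi t A *m A.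
Proof.
by rewrite expi_mxfun !mxfunM; congr mxfun; apply: funext => x; rewrite mulrC.
Qed.

Lemma expi0 : expi 0 A = 1%:M.
Proof.
by rewrite expi_mxfun -mxfun1; congr mxfun; apply: funext => x; rewrite mul0r cis0.
Qed.

Lemma expiD s t : expi (s + t) A = expi s A *m expi t A.
Proof.
by rewrite !expi_mxfun mxfunM; congr mxfun; apply: funext => x; rewrite mulrDl cisD.
Qed.

Lemma vnorm_expi_remainder_le t v : `|t| * lam_bound <= 1 ->
  vnorm ((expi t A - 1%:M - ('i * t%:C) *: A) *m v) <= 2 * (t * lam_bound) ^+ 2 * vnorm v.
Proof.
move=> t_small; rewrite expi_mxfun -mxfun1 mxfunZ !mxfunN !mxfunD.
apply: vnorm_mxfun_le => [|j]; first by rewrite mulr_ge0 ?sqr_ge0.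
have tlam_le : `|t * lam j| <= `|t| * lam_bound by rewrite normrM ler_wpM2l ?norm_lam_le.
have := norm_cis_sub_le (le_trans tlam_le t_small); rewrite rmorphM mulrA.
move/le_trans; apply; rewrite lecR ler_wpM2l // -real_normK ?num_real //.
rewrite -[X in _ <= X]real_normK ?num_real // ler_pXn2r ?nnegrE //.
by rewrite [X in _ <= X]normrM (ger0_norm lam_bound_ge0).
Qed.

Lemma vnorm_mulmx_expi_step (H : 'M[R[i]]_n) (h t : R) y :
  0 <= h -> (forall z, vnorm (H *m z) <= h * vnorm z) -> `|t| * lam_bound <= 1 ->
  vnorm (H *m (expi t A *m y)) <=
    vnorm (H *m y) + `|t| * vnorm (mxcomm H A *m y) +
    4 * (t * lam_bound) ^+ 2 * h * vnorm y.
Proof.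
move=> h0 Hh t_small; set c := 'i * t%:C; set Rm := expi t A - 1%:M - c *: A.
have commU : mxcomm H (expi t A) = mxcomm H Rm + c *: mxcomm H A.
  rewrite {1}(_ : expi t A = Rm + c *: A + 1%:M) ?mxcommDr ?mxcomm1r ?addr0 ?mxcommZr //.
  by rewrite /Rm !subrK.
have -> : H *m (expi t A *m y) =
    expi t A *m (H *m y) + (H *m (Rm *m y) - Rm *m (H *m y)) + c *: (mxcomm H A *m y).
  by rewrite mulmx_mxcomm commU mulmxDl -scalemxAl addrA /mxcomm mulmxBl -!mulmxA.
have rho_ge0 : 0 <= 2 * (t * lam_bound) ^+ 2 by rewrite mulr_ge0 ?sqr_ge0.
have HRm := le_trans (Hh _) (ler_wpM2l h0 (vnorm_expi_remainder_le y t_small)).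
have RmH := le_trans (vnorm_expi_remainder_le (H *m y) t_small) (ler_wpM2l rho_ge0 (Hh y)).
have := vnormB (H *m (Rm *m y)) (Rm *m (H *m y)).
have := vnormD (expi t A *m (H *m y)) (H *m (Rm *m y) - Rm *m (H *m y)).
have := vnormD (expi t A *m (H *m y) + (H *m (Rm *m y) - Rm *m (H *m y)))
  (c *: (mxcomm H A *m y)).
rewrite vnormZ_imag vnorm_expi; lra.
Qed.

Lemma expi_mulnS k t v :
  expi (k.+1%:R * t) A *m v = expi t A *m (expi (k%:R * t) A *m v).
Proof.
have -> : k.+1%:R * t = t + k%:R * t by rewrite mulrS mulrDl mul1r.
by rewrite expiD mulmxA.
Qed.

Lemma vnorm_mulmx_expi_le_subdiv (H : 'M[R[i]]_n) (h c xi : R) (N : nat) v :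
  0 <= h -> (forall z, vnorm (H *m z) <= h * vnorm z) -> 0 <= c ->
  (forall z, vnorm (mxcomm H A *m z) <= c * (vnorm (H *m z) + 2 * vnorm z)) ->
  c * `|xi| <= 2^-1 -> (0 < N)%N -> `|xi| * lam_bound <= N%:R ->
  vnorm (H *m (expi xi A *m v)) <=
    2 * (vnorm (H *m v) + vnorm v) + 8 * (xi * lam_bound) ^+ 2 * h * vnorm v / N%:R.
Proof.
move=> h0 Hh c0 HA c_xi N0 xi_N.
have N_gt0 : (0 : R) < N%:R by rewrite ltr0n.
pose t := xi / N%:R; pose x k := expi (k%:R * t) A *m v.
have t_small : `|t| * lam_bound <= 1.
  by rewrite normrM normfV (gtr0_norm N_gt0) mulrAC ler_pdivrMr // mul1r.
have Nt_c : N%:R * (`|t| * c) <= 2^-1.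
  rewrite normrM normfV (gtr0_norm N_gt0) (_ : _ * _ = c * `|xi|) //.
  by field; rewrite gt_eqF.
have x0 : x 0%N = v by rewrite /x mul0r expi0 mul1mx.
have xN : x N = expi xi A *m v by rewrite /x /t mulrC divfK ?gt_eqF.
have xS k : x k.+1 = expi t A *m x k by exact: expi_mulnS.
have x_norm k : vnorm (x k) = vnorm v by exact: vnorm_expi.
(* Hiding the body of [x] stops unification from unfolding matrix exponentials. *)
clearbody x.
have step k : (k < N)%N -> vnorm (H *m x k.+1) + 2 * vnorm v <=
    (1 + `|t| * c) * (vnorm (H *m x k) + 2 * vnorm v) +
    4 * (t * lam_bound) ^+ 2 * h * vnorm v.
  move=> _; rewrite xS; have := vnorm_mulmx_expi_step (x k) h0 Hh t_small.
  have := ler_wpM2l (normr_ge0 t) (HA (x k)); rewrite x_norm; lra.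
have E0 : 0 <= 4 * (t * lam_bound) ^+ 2 * h * vnorm v.
  by rewrite mulr_ge0 ?vnorm_ge0 // mulr_ge0 // mulr_ge0 ?sqr_ge0.
have b0 : 0 <= vnorm (H *m v) + 2 * vnorm v by rewrite addr_ge0 ?mulr_ge0 ?vnorm_ge0.
have := discrete_gronwall (mulr_ge0 (normr_ge0 t) c0) E0 _ Nt_c step.
rewrite /= x0 xN => /(_ b0).
have -> : 8 * (xi * lam_bound) ^+ 2 * h * vnorm v / N%:R =
    2 * (N%:R * (4 * (t * lam_bound) ^+ 2 * h * vnorm v)).
  by rewrite /t; field; rewrite gt_eqF.
lra.
Qed.

Lemma vnorm_mulmx_expi_le (H : 'M[R[i]]_n) (h c xi : R) v :
  0 <= h -> (forall z, vnorm (H *m z) <= h * vnorm z) -> 0 <= c ->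
  (forall z, vnorm (mxcomm H A *m z) <= c * (vnorm (H *m z) + 2 * vnorm z)) ->
  c * `|xi| <= 2^-1 ->
  vnorm (H *m (expi xi A *m v)) <= 2 * (vnorm (H *m v) + vnorm v).
Proof.
move=> h0 Hh c0 HA c_xi; set K := 8 * (xi * lam_bound) ^+ 2 * h * vnorm v.
have K0 : 0 <= K by rewrite mulr_ge0 ?vnorm_ge0 // mulr_ge0 // mulr_ge0 ?sqr_ge0.
have xiL0 : 0 <= `|xi| * lam_bound by rewrite mulr_ge0 ?lam_bound_ge0.
apply: (le_of_le_add_divn K0 (N0 := Num.bound (`|xi| * lam_bound))) => N N_gt.
apply: (@vnorm_mulmx_expi_le_subdiv H h c) => //; first exact: leq_ltn_trans (leq0n _) N_gt.
by apply/ltW/(lt_le_trans (archi_boundP xiL0)); rewrite ler_nat ltnW.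
Qed.

End FunctionalCalculus.

Section Spectral.
Local Open Scope sesquilinear_scope.

Lemma hermmx_spectral (R : realType) n (A : 'M[R[i]]_n) : hermmx A ->
  exists (P : 'M[R[i]]_n) (lam : 'I_n -> R),
    [/\ adjmx P *m P = 1%:M, P *m adjmx P = 1%:M & A = mxfun P lam (fun x => x%:C)].
Proof.
move=> A_herm; have adjmx_trC m p (B : 'M[R[i]]_(m, p)) : adjmx B = B ^t Num.conj.
  by apply/matrixP => i j; rewrite !mxE.
have A_hermsym : A \is hermsymmx.
  by apply/is_hermitianmxP; rewrite expr0 scale1r -adjmx_trC A_herm.
have /orthomx_spectralP A_diag := hermitian_normalmx A_hermsym.
have P_inv : invmx (spectralmx A) = adjmx (spectralmx A).
  by rewrite invmx_unitary ?spectral_unitarymx // adjmx_trC.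
exists (spectralmx A), (fun j => complex.Re (spectral_diag A 0 j)); split.
- by rewrite -P_inv mulVmx ?spectral_unit.
- by rewrite -P_inv mulmxV ?spectral_unit.
rewrite {1}A_diag P_inv /mxfun; congr (_ *m diag_mx _ *m _); apply/rowP => j.
rewrite mxE; apply/esym/RRe_real.
by move/mxOverP: (hermitian_spectral_diag_real A_hermsym); apply.
Qed.

End Spectral.

Lemma hermmx_bounded (R : realType) n (A : 'M[R[i]]_n) : hermmx A ->
  exists2 c, 0 <= c & forall v, vnorm (A *m v) <= c * vnorm v.
Proof.
move=> /hermmx_spectral[P [lam [P_unitary P_unitary' ->]]].
by exists (lam_bound lam); [exact: lam_bound_ge0 | exact: vnorm_mxfun_id_le].
Qed.

Lemma vnorm_expi_herm (R : realType) n (A : 'M[R[i]]_n) t v :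
  hermmx A -> vnorm (expi t A *m v) = vnorm v.
Proof.
by move=> /hermmx_spectral[P [lam [P_unitary P_unitary' ->]]]; exact: vnorm_expi.
Qed.

Lemma expi_comm_herm (R : realType) n (A : 'M[R[i]]_n) t :
  hermmx A -> A *m expi t A = expi t A *m A.
Proof.
by move=> /hermmx_spectral[P [lam [P_unitary P_unitary' ->]]]; exact: mxfun_id_expi_comm.
Qed.

Lemma vnorm_mulmx_expi_le_gram (R : realType) m n (H1 H2 : 'M[R[i]]_n)
    (D : 'M[R[i]]_(m, n)) (C1 xi : R) v :
  hermmx H1 -> hermmx H2 -> H1 = adjmx D *m D -> 0 <= C1 ->
  (forall z, vnorm (mxcomm H1 H2 *m z) <= C1 * (vnorm (D *m z) + vnorm z)) ->
  C1 * `|xi| <= 2^-1 ->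
  vnorm (H1 *m (expi xi H2 *m v)) <= 2 * (vnorm (H1 *m v) + vnorm v).
Proof.
move=> H1_herm /hermmx_spectral[P [lam [P_unitary P_unitary' ->]]] H1_gram C1_ge0 comm_le.
have [h h_ge0 H1_le] := hermmx_bounded H1_herm.
apply: (@vnorm_mulmx_expi_le _ _ P lam P_unitary P_unitary' _ h C1 xi v h_ge0 H1_le C1_ge0)
  => // z.
apply: le_trans (comm_le z) _; rewrite ler_wpM2l //.
have := vnorm_le_gram D z; rewrite -H1_gram; lra.
Qed.

Lemma opnorm_ge0 (R : realType) n (A : 'M[R[i]]_n) : 0 <= opnorm A.
Proof.
rewrite /opnorm; set S := [set _ | _ in _].
have S0 : S 0 by exists 0; rewrite /= ?vnorm0 ?ler01 // mulmx0 vnorm0.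
have [S_sup|S_nsup] := pselect (has_sup S); first exact: sup_upper_bound S_sup _ S0.
by rewrite sup_out.
Qed.

Lemma mxprodS (R : realType) n (F : nat -> 'M[R[i]]_n) K :
  mxprod F K.+1 = mxprod F K *m F K.
Proof.
rewrite /mxprod -addn1 iotaD foldr_cat /= mulmx1.
by elim: (iota 0 K) => [|k s IHs] /=; rewrite ?mul1mx // IHs mulmxA.
Qed.

Lemma mxprod_mul_le (R : realType) n (F : nat -> 'M[R[i]]_n) (g : 'cV[R[i]]_n -> R)
    (c : R) K v :
  0 <= c -> (forall k y, (k < K)%N -> g (F k *m y) <= c * g y) ->
  g (mxprod F K *m v) <= c ^+ K * g v.
Proof.
move=> c0; elim: K v => [|K IHK] v F_le; first by rewrite /mxprod /= mul1mx expr0 mul1r.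
rewrite mxprodS -mulmxA exprSr -mulrA.
apply: le_trans (IHK _ (fun k y kK => F_le k y (ltnW kK))) _.
by rewrite ler_wpM2l ?exprn_ge0 ?F_le.
Qed.

Definition graphnorm (R : realType) n (A : 'M[R[i]]_n) (v : 'cV[R[i]]_n) : R :=
  vnorm (A *m v) + vnorm v.

Section CommutatorEstimates.
Variables (R : realType) (m n : nat) (H1 H2 : 'M[R[i]]_n) (D1 : 'M[R[i]]_(m, n)).
Variables (C1 C2 h2 : R).
Hypotheses (H1_herm : hermmx H1) (H2_herm : hermmx H2) (H1_gram : H1 = adjmx D1 *m D1).
Hypotheses (C1_ge0 : 0 <= C1) (C2_ge0 : 0 <= C2) (h2_ge0 : 0 <= h2).
Hypothesis H2_le : forall y, vnorm (H2 *m y) <= h2 * vnorm y.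
Hypothesis comm_le :
  forall y, vnorm (mxcomm H1 H2 *m y) <= C1 * (vnorm (D1 *m y) + vnorm y).
Hypothesis comm2_le :
  forall y, vnorm (mxcomm H1 (mxcomm H1 H2) *m y) <= C2 * (vnorm (H1 *m y) + vnorm y).
Implicit Types v w y : 'cV[R[i]]_n.

Lemma mxcomm_le_graphnorm y : vnorm (mxcomm H1 H2 *m y) <= 2 * C1 * graphnorm H1 y.
Proof.
apply: le_trans (comm_le y) _; rewrite [2 * C1]mulrC -mulrA ler_wpM2l //.
have := vnorm_le_gram D1 y; rewrite -H1_gram /graphnorm.
have := vnorm_ge0 (H1 *m y); lra.
Qed.

Lemma mxcomm_le_sqrt y :
  vnorm (mxcomm H1 H2 *m y) <= C1 * (Num.sqrt (vnorm y * vnorm (H1 *m y)) + vnorm y).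
Proof.
apply: le_trans (comm_le y) _; rewrite ler_wpM2l // lerD2r.
rewrite -[vnorm (D1 *m y)]ger0_norm ?vnorm_ge0 // -sqrtr_sqr ler_wsqrtr //.
by rewrite H1_gram sqr_vnorm_le_gram.
Qed.

Lemma graphnorm_H2_le y : graphnorm H1 (H2 *m y) <= (h2 + 2 * C1) * graphnorm H1 y.
Proof.
rewrite {1}/graphnorm mulmx_mxcomm.
have := vnormD (H2 *m (H1 *m y)) (mxcomm H1 H2 *m y).
have := H2_le (H1 *m y); have := H2_le y; have := mxcomm_le_graphnorm y.
rewrite /graphnorm; lra.
Qed.

Lemma mxcomm2_le_graphnorm y :
  vnorm (mxcomm H2 (mxcomm H2 H1) *m y) <= 4 * C1 * (C1 + h2) * graphnorm H1 y.
Proof.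
rewrite mxcomm_double mulmx_mxcommE; apply: le_trans (vnormB _ _) _.
have gy0 : 0 <= graphnorm H1 y by rewrite addr_ge0 ?vnorm_ge0.
have := le_trans (mxcomm_le_graphnorm (H2 *m y))
  (ler_wpM2l (mulr_ge0 (ler0n _ 2) C1_ge0) (graphnorm_H2_le y)).
have := le_trans (H2_le _) (ler_wpM2l h2_ge0 (mxcomm_le_graphnorm y)).
nra.
Qed.

Lemma graphnorm_expi_le (b : bool) (x : R) y : C1 * `|x| <= 2^-1 ->
  graphnorm H1 (expi x (if b then H1 else H2) *m y) <= 3 * graphnorm H1 y.
Proof.
move=> x_le; have := vnorm_ge0 y; have := vnorm_ge0 (H1 *m y).
case: b; rewrite /graphnorm vnorm_expi_herm //.
  by rewrite mulmxA expi_comm_herm // -mulmxA vnorm_expi_herm //; lra.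
have := vnorm_mulmx_expi_le_gram y H1_herm H2_herm H1_gram C1_ge0 comm_le x_le.
lra.
Qed.

Lemma graphnorm_mxprod_le K (x : nat -> R) (l : nat -> bool) v :
  (forall k, (k < K)%N -> C1 * `|x k| <= 2^-1) ->
  let w := mxprod (fun k => expi (x k) (if l k then H1 else H2)) K *m v in
  vnorm w <= vnorm v /\ graphnorm H1 w <= 3 ^+ K * graphnorm H1 v.
Proof.
move=> x_le w; rewrite {}/w; split; last first.
  by apply: mxprod_mul_le => // k y kK; exact: graphnorm_expi_le (x_le k kK).
rewrite -[vnorm v]mul1r -(expr1n _ K); apply: mxprod_mul_le => // k y _.
by case: (l k); rewrite vnorm_expi_herm // mul1r.
Qed.

Definition estimate_const (G : R) := 4 * (1 + C1 + C2 + h2) ^+ 2 * (G + 1).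

Lemma estimate_const_gt0 (G : R) : 0 <= G -> 0 < estimate_const G.
Proof.
move=> G0; have Q0 : 0 < 1 + C1 + C2 + h2.
  by have := C1_ge0; have := C2_ge0; have := h2_ge0; lra.
by rewrite /estimate_const !mulr_gt0 ?exprn_gt0 //; lra.
Qed.

Lemma commutator_estimates (G : R) v w :
  1 <= G -> vnorm w <= vnorm v -> graphnorm H1 w <= G * graphnorm H1 v ->
  [/\ vnorm (H1 *m w) <= estimate_const G * (vnorm (H1 *m v) + vnorm v),
      vnorm (H2 *m w) <= estimate_const G * vnorm v,
      vnorm (mxcomm H1 H2 *m w) <=
        estimate_const G * (Num.sqrt (vnorm v * vnorm (H1 *m v)) + vnorm v),
      vnorm (mxcomm H1 (mxcomm H1 H2) *m w) <=
        estimate_const G * (vnorm (H1 *m v) + vnorm v)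
    & vnorm (mxcomm H2 (mxcomm H2 H1) *m w) <=
        estimate_const G * (vnorm (H1 *m v) + vnorm v)].
Proof.
move=> G1 w_le gw_le; set Ct := estimate_const G; set Q := 1 + C1 + C2 + h2.
have C10 := C1_ge0; have C20 := C2_ge0; have h20 := h2_ge0.
have Ct_le k G' S : 0 <= k -> k <= 4 * Q ^+ 2 -> 0 <= G' -> G' <= G + 1 -> 0 <= S ->
    k * (G' * S) <= Ct * S.
  by move=> k0 kQ G'0 G'G S0; rewrite mulrA ler_wpM2r // /Ct /estimate_const ler_pM.
have Q_le : Q <= 4 * Q ^+ 2 by rewrite expr2 mulrA ler_peMl /Q //; lra.
have [one_le C1_le C2_le h2_le] : [/\ 1 <= 4 * Q ^+ 2, C1 <= 4 * Q ^+ 2,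
    C2 <= 4 * Q ^+ 2 & h2 <= 4 * Q ^+ 2] by split; rewrite /Q in Q_le *; lra.
have C1h2_le : 4 * C1 * (C1 + h2) <= 4 * Q ^+ 2.
  by rewrite -mulrA ler_wpM2l // expr2 ler_pM /Q //; lra.
have [G0 G_le one_leG] : [/\ 0 <= G, G <= G + 1 & 1 <= G + 1] by split; lra.
have gv0 : 0 <= graphnorm H1 v by rewrite addr_ge0 ?vnorm_ge0.
have nv0 := vnorm_ge0 v.
have gw_le' : graphnorm H1 w <= 1 * (G * graphnorm H1 v) by rewrite mul1r.
split.
- apply: le_trans (Ct_le 1 G _ ler01 one_le G0 G_le gv0).
  by apply: le_trans gw_le'; rewrite /graphnorm lerDl vnorm_ge0.
- apply: le_trans (Ct_le h2 1 _ h20 h2_le ler01 one_leG nv0).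
  by rewrite mul1r; apply: le_trans (H2_le w) _; rewrite ler_wpM2l.
- set S := Num.sqrt _ + _; have S0 : 0 <= S by rewrite addr_ge0 ?sqrtr_ge0.
  apply: le_trans (Ct_le C1 (G + 1) _ C10 C1_le (le_trans ler01 one_leG) (lexx _) S0).
  apply: le_trans (mxcomm_le_sqrt w) _; rewrite ler_wpM2l // mulrDl mul1r.
  apply: lerD.
    exact: sqrt_mul_le G1 nv0 (vnorm_ge0 _) (vnorm_ge0 _) (vnorm_ge0 _) w_le gw_le.
  by apply: le_trans w_le _; rewrite lerDr sqrtr_ge0.
- apply: le_trans (Ct_le C2 G _ C20 C2_le G0 G_le gv0).
  by apply: le_trans (comm2_le w) _; rewrite ler_wpM2l.
- apply: le_trans (Ct_le _ G _ _ C1h2_le G0 G_le gv0); last by rewrite !mulr_ge0 ?addr_ge0.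
  by apply: le_trans (mxcomm2_le_graphnorm w) _; rewrite ler_wpM2l ?mulr_ge0 ?addr_ge0.
Qed.

End CommutatorEstimates.

Theorem lemma7 (R : realType) (n : nat) (H2 : 'M[R[i]]_n) (C1 C2 : R) :
  hermmx H2 -> 0 <= C1 -> 0 <= C2 ->
  (forall (m : nat) (H1 : 'M[R[i]]_n) (D1 : 'M[R[i]]_(m, n)),
     hermmx H1 -> H1 = adjmx D1 *m D1 ->
     (forall v : 'cV[R[i]]_n,
        vnorm (mxcomm H1 H2 *m v) <= C1 * (vnorm (D1 *m v) + vnorm v)) ->
     (forall v : 'cV[R[i]]_n,
        vnorm (mxcomm H1 (mxcomm H1 H2) *m v) <= C2 * (vnorm (H1 *m v) + vnorm v)) ->
     (* (1) *)
     (forall v : 'cV[R[i]]_n, vnorm (D1 *m v) <= vnorm (H1 *m v) + vnorm v) /\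
     (* (2) *)
     (forall (xi : R), (C1 + opnorm H2) * `|xi| <= 2^-1 ->
        forall v : 'cV[R[i]]_n,
          vnorm (H1 *m (expi xi H2 *m v)) <= 2 * (vnorm (H1 *m v) + vnorm v))) /\
  (* (3) *)
  (forall (K : nat) (h : R) (l : nat -> bool) (xi : nat -> R),
     (1 <= K)%N -> 0 < h ->
     (forall k, (k < K)%N -> (C1 + opnorm H2) * `|xi k| * h <= 2^-1) ->
     exists Ct : R, 0 < Ct /\
       forall (m : nat) (H1 : 'M[R[i]]_n) (D1 : 'M[R[i]]_(m, n)),
         hermmx H1 -> H1 = adjmx D1 *m D1 ->
         (forall v : 'cV[R[i]]_n,
            vnorm (mxcomm H1 H2 *m v) <= C1 * (vnorm (D1 *m v) + vnorm v)) ->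
         (forall v : 'cV[R[i]]_n,
            vnorm (mxcomm H1 (mxcomm H1 H2) *m v) <= C2 * (vnorm (H1 *m v) + vnorm v)) ->
         forall v : 'cV[R[i]]_n,
           let w := mxprod (fun k => expi (h * xi k) (if l k then H1 else H2)) K *m v in
           [/\ vnorm (H1 *m w) <= Ct * (vnorm (H1 *m v) + vnorm v),
               vnorm (H2 *m w) <= Ct * vnorm v,
               vnorm (mxcomm H1 H2 *m w)
                 <= Ct * (Num.sqrt (vnorm v * vnorm (H1 *m v)) + vnorm v),
               vnorm (mxcomm H1 (mxcomm H1 H2) *m w) <= Ct * (vnorm (H1 *m v) + vnorm v)
             & vnorm (mxcomm H2 (mxcomm H2 H1) *m w) <= Ct * (vnorm (H1 *m v) + vnorm v)]).
Proof.
move=> H2_herm C1_ge0 C2_ge0; have [h2 h2_ge0 H2_le] := hermmx_bounded H2_herm.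
have C1_xi x : (C1 + opnorm H2) * `|x| <= 2^-1 -> C1 * `|x| <= 2^-1.
  by apply: le_trans; rewrite ler_wpM2r // lerDl opnorm_ge0.
split=> [m H1 D1 H1_herm H1_gram comm_le _|K h l xi _ h_gt0 xi_le].
  split=> [v|xi /C1_xi xi_le v]; first by rewrite H1_gram vnorm_le_gram.
  exact: vnorm_mulmx_expi_le_gram H1_herm H2_herm H1_gram C1_ge0 comm_le xi_le.
exists (estimate_const C1 C2 h2 (3 ^+ K)).
split; first by apply: estimate_const_gt0; rewrite ?exprn_ge0.
move=> m H1 D1 H1_herm H1_gram comm_le comm2_le v w.
have hxi_le k : (k < K)%N -> C1 * `|h * xi k| <= 2^-1.
  by move=> kK; apply: C1_xi; rewrite normrM (gtr0_norm h_gt0) [h * _]mulrC mulrA xi_le.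
have [w_le gw_le] := graphnorm_mxprod_le H1_herm H2_herm H1_gram C1_ge0 comm_le l v hxi_le.
by apply: commutator_estimates => //; [exact: H1_gram | rewrite exprn_ege1 // ler1n].
Qed.
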